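(* Let $\varrho,\sigma$ be density operators on a finite-dimensional Hilbert space and $\alpha\in(0,1)$. Suppose $D_\alpha^{\mathrm{test}}(\varrho\|\sigma)=D_\alpha^{\mathrm{meas}}(\varrho\|\sigma)$. Then for every orthogonal projection $P$ attaining $\max_{P\text{ projection}}D_\alpha(\mathcal P(\varrho)\|\mathcal P(\sigma))$, with $P^\perp:=I-P$, \[ (\operatorname{Tr}\sigma P)P\varrho P=(\operatorname{Tr}\varrho P)P\sigma P,\qquad (\operatorname{Tr}\sigma P^\perp)P^\perp\varrho P^\perp=(\operatorname{Tr}\varrho P^\perp)P^\perp\sigma P^\perp. \] If moreover $\varrho\ne\sigma$, then $\varrho^0\le\sigma^0$ implies $P\sigma P\ne0$ and $P^\perp\sigma P^\perp\neq0$, and $\varrho^0\ge\sigma^0$ implies $P\varrho P\ne0$ and $P^\perp\varrho P^\perp\ne0$.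
   Context: $A^0$ denotes the support projection of a PSD operator $A$. For probability vectors $p,q$ and $\alpha\in(0,1)$, $D_\alpha(p\|q)=\frac{1}{\alpha-1}\log\sum_xp(x)^\alpha q(x)^{1-\alpha}$. For an operator $0\le T\le I$, $\mathcal T(X):=(\operatorname{Tr}XT,\operatorname{Tr}X(I-T))$ (written $\mathcal P$ when $T=P$ is a projection). $D_\alpha^{\mathrm{test}}(\varrho\|\sigma):=\max_{0\le T\le I}D_\alpha(\mathcal T(\varrho)\|\mathcal T(\sigma))$, which equals the maximum of $D_\alpha(\mathcal P(\varrho)\|\mathcal P(\sigma))$ over projections $P$. For a finite-outcome POVM $M$, $\mathcal M(\varrho):=(\operatorname{Tr}M_x\varrho)_x$, and $D_\alpha^{\mathrm{meas}}(\varrho\|\sigma):=\sup_MD_\alpha(\mathcal M(\varrho)\|\mathcal M(\sigma))$. *)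

From HB Require Import structures.
From mathcomp Require Import all_boot all_order all_algebra.
From mathcomp Require Import spectral.
From mathcomp Require Import complex.
From mathcomp Require Import classical_sets boolp reals ereal exp.

Set Implicit Arguments.
Unset Strict Implicit.
Unset Printing Implicit Defensive.

Import Order.TTheory GRing.Theory Num.Theory.
Local Open Scope ring_scope.
Local Open Scope classical_set_scope.

Section QDefs.
Variable R : realType.
Local Notation C := (R[i]).

Definition adj {m n} (A : 'M[C]_(m, n)) : 'M[C]_(n, m) := (map_mx conjc A)^T.

(* positive semidefinite: <v, A v> >= 0 for every vector v (complex order,
   so in particular <v, A v> is real); together with hermiticity *)
Definition psd {n} (A : 'M[C]_n) : Prop :=
  adj A = A /\ forall v : 'cV[C]_n, 0 <= (adj v *m A *m v) 0 0.

Definition loewner_le {n} (A B : 'M[C]_n) : Prop := psd (B - A).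

Definition density {n} (rho : 'M[C]_n) : Prop := psd rho /\ \tr rho = 1.

Definition projection {n} (P : 'M[C]_n) : Prop := P *m P = P /\ adj P = P.

Definition test {n} (T : 'M[C]_n) : Prop := psd T /\ psd (1%:M - T).

(* support projection A^0: orthogonal projection onto the range of A
   (for hermitian A, its row space equals the conjugate of its range) *)
Definition supp {n} (A : 'M[C]_n) : 'M[C]_n := proj_ortho A.

(* Tr X T as a real number (it is real for hermitian X, T) *)
Definition trR {n} (X T : 'M[C]_n) : R := complex.Re (\tr (X *m T)).

Definition Dalpha (alpha : R) {k} (p q : 'I_k -> R) : \bar R :=
  let Q := \sum_(x < k) p x `^ alpha * q x `^ (1 - alpha) in
  if Q == 0 then +oo%E else (((alpha - 1)^-1 * ln Q)%:E)%E.

Definition test_ch {n} (T X : 'M[C]_n) : 'I_2 -> R :=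
  fun x => if x == ord0 then trR X T else trR X (1%:M - T).

Definition povm {n k} (M : 'I_k -> 'M[C]_n) : Prop :=
  (forall x, psd (M x)) /\ \sum_(x < k) M x = 1%:M.

Definition meas_ch {n k} (M : 'I_k -> 'M[C]_n) (X : 'M[C]_n) : 'I_k -> R :=
  fun x => trR X (M x).

Definition Dtest (alpha : R) {n} (rho sigma : 'M[C]_n) : \bar R :=
  ereal_sup [set Dalpha alpha (test_ch T rho) (test_ch T sigma) | T in [set T | test T]].

Definition Dmeas (alpha : R) {n} (rho sigma : 'M[C]_n) : \bar R :=
  ereal_sup [set d | exists k (M : 'I_k -> 'M[C]_n),
     povm M /\ d = Dalpha alpha (meas_ch M rho) (meas_ch M sigma)].

End QDefs.

(* Write Q(T) = gmean (Tr rho T) (Tr sigma T) + gmean (Tr rho T^perp) (Tr sigma T^perp)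
   with gmean a b = a^alpha b^(1-alpha), so that D_alpha = ln Q / (alpha - 1).
   By the two-term Hoelder inequality gmean is jointly concave and superadditive,
   so in an eigenbasis of a test T the quantity Q is concave in each eigenvalue;
   hence it is minimised at a projection, and D^test is attained at projections.
   For a maximising projection P and any projection E, the three-outcome
   measurement {PEP, P(1-E)P, 1-P} has divergence at most D^meas = D^test = D(P),
   while superadditivity gives at least D(P): equality in Hoelder forces
   Tr(rho PEP) Tr(sigma P) = Tr(sigma PEP) Tr(rho P). Taking E rank one and
   polarising yields the proportionality of P rho P and P sigma P, and likewise for
   1 - P, which is also a maximiser. Finally, if P sigma P = 0 and rho^0 <= sigma^0,
   then Tr rho P = Tr sigma P = 0, so D(P) = 0; but rho <> sigma is detected by a
   rank-one projection of positive divergence, contradicting maximality. *)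

From mathcomp Require Import all_boot all_order all_algebra.
From mathcomp Require Import spectral complex sesquilinear.
From mathcomp Require Import classical_sets boolp reals ereal exp.
From mathcomp Require Import ring lra.

Set Implicit Arguments.
Unset Strict Implicit.
Unset Printing Implicit Defensive.

Import Order.TTheory GRing.Theory Num.Theory.
Local Open Scope ring_scope.

Section WeightedGeometricMean.
Variables (R : realType) (alpha : R).
Hypotheses (alpha_gt0 : 0 < alpha) (alpha_lt1 : alpha < 1).

Definition gmean (a b : R) := a `^ alpha * b `^ (1 - alpha).

Let beta_gt0 : 0 < 1 - alpha. Proof. by rewrite subr_gt0. Qed.

Lemma gmean_ge0 a b : 0 <= gmean a b.
Proof. by rewrite mulr_ge0 ?powR_ge0. Qed.

Lemma gmean0l b : gmean 0 b = 0.
Proof. by rewrite /gmean powR0 ?mul0r ?gt_eqF. Qed.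

Lemma gmean0r a : gmean a 0 = 0.
Proof. by rewrite /gmean (powR0 (x := 1 - alpha)) ?mulr0 ?gt_eqF. Qed.

Lemma gmeanM s t a b : 0 <= s -> 0 <= t -> 0 <= a -> 0 <= b ->
  gmean (s * a) (t * b) = gmean s t * gmean a b.
Proof. by move=> *; rewrite /gmean !powRM // mulrACA. Qed.

Lemma gmeanxx s : 0 <= s -> gmean s s = s.
Proof. by move=> s0; rewrite /gmean -powRD ?subrKC ?powRr1 ?oner_eq0. Qed.

Lemma gmean_le_amean x y : 0 <= x -> 0 <= y ->
  gmean x y <= alpha * x + (1 - alpha) * y.
Proof.
move=> x0 y0.
have := @conjugate_powR _ (x `^ alpha) (y `^ (1 - alpha)) alpha^-1 (1 - alpha)^-1.
rewrite !powR_ge0 !invr_gt0 alpha_gt0 beta_gt0 !invrK addrC subrK.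
move=> /(_ isT isT isT isT erefl).
by rewrite -!powRrM !mulfV ?gt_eqF // !powRr1 // (mulrC x) (mulrC y).
Qed.

(* Apply AM-GM to the square roots u, v of x, y: the gap between
   alpha x + (1 - alpha) y and the square of alpha u + (1 - alpha) v
   is alpha (1 - alpha) (u - v)^2. *)
Lemma amean_le_gmean_eq x y : 0 <= x -> 0 <= y ->
  alpha * x + (1 - alpha) * y <= gmean x y -> x = y.
Proof.
move=> x0 y0 h.
set u := Num.sqrt x; set v := Num.sqrt y.
have u0 : 0 <= u by apply: sqrtr_ge0.
have v0 : 0 <= v by apply: sqrtr_ge0.
have xu : x = u * u by rewrite -expr2 sqr_sqrtr.
have yv : y = v * v by rewrite -expr2 sqr_sqrtr.
have gmean_sqr : gmean x y = gmean u v * gmean u v by rewrite xu yv gmeanM.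
have amgm_uv : gmean u v * gmean u v <=
    (alpha * u + (1 - alpha) * v) * (alpha * u + (1 - alpha) * v).
  by apply: ler_pM; rewrite ?gmean_ge0 ?gmean_le_amean.
have ab : 0 < alpha * (1 - alpha) by rewrite mulr_gt0.
have uv : u = v.
  rewrite gmean_sqr {1}xu {1}yv in h.
  have : (u - v) ^+ 2 <= 0 by nra.
  by rewrite expr2 => ?; nra.
by rewrite xu yv uv.
Qed.

Lemma gmean_normalize s t a b : 0 < s -> 0 < t -> 0 <= a -> 0 <= b ->
  gmean a b = gmean s t * gmean (a / s) (b / t).
Proof.
move=> s0 t0 a0 b0.
have [s_ge0 t_ge0] := (ltW s0, ltW t0).
by rewrite -gmeanM ?divr_ge0 // [s * _]mulrC [t * _]mulrC !divfK ?gt_eqF.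
Qed.

Let amean_normalized (a b c d : R) : 0 < a + c -> 0 < b + d ->
  alpha * (a / (a + c)) + (1 - alpha) * (b / (b + d))
  + (alpha * (c / (a + c)) + (1 - alpha) * (d / (b + d))) = 1.
Proof.
move=> S0 T0; rewrite addrACA -!mulrDr -!mulrDl !divff ?gt_eqF //; lra.
Qed.

Let sum_ge0_cases (a c : R) : 0 <= a -> 0 <= c -> (a = 0 /\ c = 0) \/ 0 < a + c.
Proof.
move=> a0 c0; have := addr_ge0 a0 c0; rewrite le_eqVlt => /predU1P[S0|]; last by right.
by left; split; lra.
Qed.

Lemma gmean_superadd a b c d : 0 <= a -> 0 <= b -> 0 <= c -> 0 <= d ->
  gmean a b + gmean c d <= gmean (a + c) (b + d).
Proof.
move=> a0 b0 c0 d0.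
have [[-> ->]|S0] := sum_ge0_cases a0 c0; first by rewrite addr0 !gmean0l addr0.
have [[-> ->]|T0] := sum_ge0_cases b0 d0; first by rewrite addr0 !gmean0r addr0.
rewrite (gmean_normalize S0 T0 a0 b0) (gmean_normalize S0 T0 c0 d0).
rewrite -mulrDr ler_piMr ?gmean_ge0 // -(amean_normalized S0 T0).
by rewrite lerD // gmean_le_amean // divr_ge0 // ltW.
Qed.

Lemma gmean_superadd_eq a b c d : 0 <= a -> 0 <= b -> 0 <= c -> 0 <= d ->
  gmean (a + c) (b + d) <= gmean a b + gmean c d -> a * d = b * c.
Proof.
move=> a0 b0 c0 d0.
have [[-> ->]|S0] := sum_ge0_cases a0 c0; first by rewrite !mul0r mulr0.
have [[-> ->]|T0] := sum_ge0_cases b0 d0; first by rewrite !mul0r mulr0.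
have a0' := divr_ge0 a0 (ltW S0); have b0' := divr_ge0 b0 (ltW T0).
have c0' := divr_ge0 c0 (ltW S0); have d0' := divr_ge0 d0 (ltW T0).
rewrite (gmean_normalize S0 T0 a0 b0) (gmean_normalize S0 T0 c0 d0) -mulrDr.
rewrite ler_pMr ?mulr_gt0 ?powR_gt0 // => le1.
have le_c := gmean_le_amean c0' d0'; have sum1 := amean_normalized S0 T0.
have /(amean_le_gmean_eq a0' b0') : alpha * (a / (a + c))
    + (1 - alpha) * (b / (b + d)) <= gmean (a / (a + c)) (b / (b + d)) by lra.
move=> /eqP; rewrite eqr_div ?lt0r_neq0 // => /eqP.
by rewrite !mulrDr; lra.
Qed.

Lemma gmeanZ l a b : 0 <= l -> 0 <= a -> 0 <= b ->
  gmean (l * a) (l * b) = l * gmean a b.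
Proof. by move=> l0 a0 b0; rewrite gmeanM ?gmeanxx. Qed.

Lemma gmean_concave t a b c d : 0 <= t <= 1 ->
  0 <= a -> 0 <= b -> 0 <= c -> 0 <= d ->
  (1 - t) * gmean a b + t * gmean c d
    <= gmean ((1 - t) * a + t * c) ((1 - t) * b + t * d).
Proof.
move=> /andP[t0 t1] a0 b0 c0 d0; have t1' : 0 <= 1 - t by rewrite subr_ge0.
by rewrite -!gmeanZ //; apply: gmean_superadd; apply: mulr_ge0.
Qed.

Lemma gmean_binary_lt1 p q : 0 <= p <= 1 -> 0 <= q <= 1 -> p != q ->
  gmean p q + gmean (1 - p) (1 - q) < 1.
Proof.
move=> /andP[p0 p1] /andP[q0 q1] pq.
have [p1' q1'] : 0 <= 1 - p /\ 0 <= 1 - q by rewrite !subr_ge0.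
have := gmean_superadd_eq p0 q0 p1' q1'; have := gmean_superadd p0 q0 p1' q1'.
rewrite !subrKC gmeanxx // => le1 eq_pq; rewrite lt_neqAle le1 andbT.
apply: contra pq => /eqP e.
have /eq_pq : 1 <= gmean p q + gmean (1 - p) (1 - q) by rewrite e.
by rewrite !mulrBr !mulr1 => ?; apply/eqP; lra.
Qed.

End WeightedGeometricMean.

Section RenyiOfQ.
Variables (R : realType) (alpha : R).
Hypothesis alpha_lt1 : alpha < 1.

Definition renyiQ (Q : R) : \bar R :=
  if Q == 0 then +oo%E else ((alpha - 1)^-1 * ln Q)%:E.

Lemma DalphaE k (p q : 'I_k -> R) :
  Dalpha alpha p q = renyiQ (\sum_x gmean alpha (p x) (q x)).
Proof. by []. Qed.

Lemma renyiQ_lt Q1 Q2 : 0 <= Q1 -> Q1 < Q2 -> (renyiQ Q2 < renyiQ Q1)%E.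
Proof.
move=> Q1_ge0 lt12; have Q2_gt0 := le_lt_trans Q1_ge0 lt12.
rewrite /renyiQ gt_eqF //; case: eqP => [_|/eqP Q1_neq0]; first by rewrite ltey.
rewrite lte_fin ltr_nM2l ?invr_lt0 ?subr_lt0 // ltr_ln //.
by rewrite posrE lt_def Q1_neq0.
Qed.

Lemma ler_renyiQ Q1 Q2 : 0 <= Q1 -> 0 <= Q2 ->
  (renyiQ Q2 <= renyiQ Q1)%E = (Q1 <= Q2).
Proof.
move=> Q1_ge0 Q2_ge0; apply/idP/idP.
  by apply: contraTT; rewrite -!ltNge; apply: renyiQ_lt.
by rewrite le_eqVlt => /predU1P[->//|/(renyiQ_lt Q1_ge0)/ltW].
Qed.

End RenyiOfQ.

Section Binarization.
Variable R : realType.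

Lemma cube_vertex_le n (f : ('I_n -> R) -> R) :
  (forall mu i, (forall j, 0 <= mu j <= 1) ->
     (1 - mu i) * f [eta mu with i |-> 0] + mu i * f [eta mu with i |-> 1] <= f mu) ->
  forall mu, (forall j, 0 <= mu j <= 1) ->
  exists2 nu, (forall j, nu j * nu j = nu j) & f nu <= f mu.
Proof.
move=> f_concave.
suff vertex k mu : (forall j, 0 <= mu j <= 1) ->
    (forall j : 'I_n, (k <= j)%N -> mu j * mu j = mu j) ->
    exists2 nu, (forall j, nu j * nu j = nu j) & f nu <= f mu.
  by move=> mu mu01; apply: (vertex n) => // j; rewrite leqNgt ltn_ord.
elim: k mu => [|k IHk] mu mu01 mu_bool; first by exists mu => // j; apply: mu_bool.
have [kn|nk] := ltnP k n; last first.
  by apply: IHk => // j kj; have := leq_trans nk kj; rewrite leqNgt ltn_ord.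
set i := Ordinal kn.
have [c [c01 c_bool le_c]] : exists c : R,
    [/\ 0 <= c <= 1, c * c = c & f [eta mu with i |-> c] <= f mu].
  have := f_concave mu i mu01; have /andP[t0 t1] := mu01 i.
  have [le01|le10] := lerP (f [eta mu with i |-> 0]) (f [eta mu with i |-> 1]).
    by exists 0; rewrite lexx ler01 mulr0; split => //; nra.
  by exists 1; rewrite lexx ler01 mulr1; split => //; nra.
have [nu nu_bool le_nu] : exists2 nu, (forall j, nu j * nu j = nu j)
    & f nu <= f [eta mu with i |-> c].
  apply: IHk => j /=; first by case: eqP.
  case: eqP => [//|/eqP ji kj]; apply: mu_bool; rewrite ltn_neqAle kj andbT.
  by apply: contra ji => /eqP kE; apply/eqP/val_inj.
by exists nu => //; apply: le_trans le_c.
Qed.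

Variable alpha : R.
Hypotheses (alpha_gt0 : 0 < alpha) (alpha_lt1 : alpha < 1).

(* Q(T) for a test T with eigenvalues mu, when r and s are the diagonals of
   rho and sigma in an eigenbasis of T. *)
Definition Qdiag n (r s mu : 'I_n -> R) :=
  gmean alpha (\sum_i mu i * r i) (\sum_i mu i * s i) +
  gmean alpha (\sum_i (1 - mu i) * r i) (\sum_i (1 - mu i) * s i).

Lemma Qdiag_concave n (r s mu0 mu1 : 'I_n -> R) t :
  (forall i, 0 <= r i) -> (forall i, 0 <= s i) ->
  (forall i, 0 <= mu0 i <= 1) -> (forall i, 0 <= mu1 i <= 1) -> 0 <= t <= 1 ->
  (1 - t) * Qdiag r s mu0 + t * Qdiag r s mu1
    <= Qdiag r s (fun i => (1 - t) * mu0 i + t * mu1 i).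
Proof.
move=> r0 s0 mu0_01 mu1_01 t01.
have sum_conv (nu0 nu1 : 'I_n -> R) x : \sum_i ((1 - t) * nu0 i + t * nu1 i) * x i
    = (1 - t) * (\sum_i nu0 i * x i) + t * (\sum_i nu1 i * x i).
  by rewrite !mulr_sumr -big_split; apply: eq_bigr => j _ /=; ring.
have compl_conv i : 1 - ((1 - t) * mu0 i + t * mu1 i)
    = (1 - t) * (1 - mu0 i) + t * (1 - mu1 i) by ring.
have sum_ge0 (nu x : 'I_n -> R) : (forall i, 0 <= nu i) -> (forall i, 0 <= x i) ->
    0 <= \sum_i nu i * x i by move=> *; apply: sumr_ge0 => i _; apply: mulr_ge0.
have [mu0_ge0 mu1_ge0] : (forall i, 0 <= mu0 i) /\ (forall i, 0 <= mu1 i).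
  by split=> i; [case/andP: (mu0_01 i) | case/andP: (mu1_01 i)].
have [mu0_le1 mu1_le1] : (forall i, 0 <= 1 - mu0 i) /\ (forall i, 0 <= 1 - mu1 i).
  by split=> i; rewrite subr_ge0; [case/andP: (mu0_01 i) | case/andP: (mu1_01 i)].
rewrite /Qdiag (eq_bigr _ (fun i _ => congr1 (fun z => z * r i) (compl_conv i))).
rewrite (eq_bigr _ (fun i _ => congr1 (fun z => z * s i) (compl_conv i))).
rewrite !sum_conv mulrDr mulrDr addrACA.
by apply: lerD; apply: gmean_concave; rewrite ?sum_ge0.
Qed.

Lemma Qdiag_vertex n (r s mu : 'I_n -> R) :
  (forall i, 0 <= r i) -> (forall i, 0 <= s i) -> (forall i, 0 <= mu i <= 1) ->
  exists2 nu, (forall i, nu i * nu i = nu i) & Qdiag r s nu <= Qdiag r s mu.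
Proof.
move=> r0 s0; apply: cube_vertex_le => nu i nu01.
have upd01 (c : R) : 0 <= c <= 1 -> forall j, 0 <= [eta nu with i |-> c] j <= 1.
  by move=> c01 j /=; case: eqP.
have nuE : (fun j => (1 - nu i) * [eta nu with i |-> 0] j
                     + nu i * [eta nu with i |-> 1] j) = nu.
  by apply/funext => j /=; case: eqP => [->|_]; ring.
have := Qdiag_concave r0 s0 (upd01 0 _) (upd01 1 _) (nu01 i).
by rewrite nuE; apply; rewrite ?lexx ?ler01.
Qed.

End Binarization.

Local Open Scope complex_scope.

Section Adjoint.
Variable R : realType.
Local Notation C := R[i].

Lemma adjmxE m n (A : 'M[C]_(m, n)) : adj A = (A ^t*)%sesqui.
Proof. by apply/matrixP => i j; rewrite !mxE. Qed.

Lemma adjmxK m n (A : 'M[C]_(m, n)) : adj (adj A) = A.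
Proof. by apply/matrixP => i j; rewrite !mxE conjcK. Qed.

Lemma adjmxD m n (A B : 'M[C]_(m, n)) : adj (A + B) = adj A + adj B.
Proof. by apply/matrixP => i j; rewrite !mxE rmorphD. Qed.

Lemma adjmxB m n (A B : 'M[C]_(m, n)) : adj (A - B) = adj A - adj B.
Proof. by apply/matrixP => i j; rewrite !mxE rmorphB. Qed.

Lemma adjmxZ m n c (A : 'M[C]_(m, n)) : adj (c *: A) = conjc c *: adj A.
Proof. by apply/matrixP => i j; rewrite !mxE rmorphM. Qed.

Lemma adjmx1 n : adj (1%:M : 'M[C]_n) = 1%:M.
Proof. by apply/matrixP => i j; rewrite !mxE conjc_nat eq_sym. Qed.

Lemma adjmx_mul m n p (A : 'M[C]_(m, n)) (B : 'M[C]_(n, p)) :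
  adj (A *m B) = adj B *m adj A.
Proof.
apply/matrixP => i j; rewrite !mxE rmorph_sum; apply: eq_bigr => k _.
by rewrite !mxE rmorphM mulrC.
Qed.

Lemma adjmx_delta n (i : 'I_n) : adj (delta_mx i 0 : 'cV[C]_n) = delta_mx 0 i.
Proof. by apply/matrixP => a b; rewrite !mxE conjc_nat andbC. Qed.

Lemma ge0_ReE (z : C) : 0 <= z -> z = (complex.Re z)%:C.
Proof. by move=> /ger0_real /RRe_real. Qed.

Lemma Re_ge0 (z : C) : 0 <= z -> 0 <= complex.Re z.
Proof. by rewrite lecE => /andP[]. Qed.

Lemma ReD (x y : C) : complex.Re (x + y) = complex.Re x + complex.Re y.
Proof. by case: x; case: y. Qed.

Lemma ReB (x y : C) : complex.Re (x - y) = complex.Re x - complex.Re y.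
Proof. by case: x; case: y. Qed.

Lemma ReMr (z : C) r : complex.Re (z * r%:C) = complex.Re z * r.
Proof. by case: z => a b /=; rewrite mulr0 subr0. Qed.

Lemma Re_sum n (F : 'I_n -> C) :
  complex.Re (\sum_i F i) = \sum_i complex.Re (F i).
Proof. exact: (big_morph _ ReD). Qed.

Definition qform n (u : 'cV[C]_n) (X : 'M[C]_n) (w : 'cV[C]_n) : C :=
  (adj u *m X *m w) 0 0.

Lemma qform_delta n (X : 'M[C]_n) i j :
  qform (delta_mx i 0) X (delta_mx j 0) = X i j.
Proof. by rewrite /qform adjmx_delta -rowE -colE !mxE. Qed.

Lemma qformD n (X : 'M[C]_n) u w c :
  qform (u + c *: w) X (u + c *: w) =
  qform u X u + c * qform u X w + conjc c * qform w X u + conjc c * c * qform w X w.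
Proof.
rewrite /qform adjmxD adjmxZ !mulmxDl !mulmxDr -!scalemxAl -!scalemxAr !mxE.
by rewrite !mulrA; ring.
Qed.

Lemma qformB n (u w : 'cV[C]_n) (A B : 'M[C]_n) :
  qform u (A - B) w = qform u A w - qform u B w.
Proof. by rewrite /qform mulmxBr mulmxBl !mxE. Qed.

Lemma qformZ n (u w : 'cV[C]_n) a (A : 'M[C]_n) :
  qform u (a *: A) w = a * qform u A w.
Proof. by rewrite /qform -scalemxAr -scalemxAl mxE. Qed.

(* Polarization: the vectors e_i + c e_j for c = 1 and c = i give
   X i j + X j i = 0 and X i j - X j i = 0. *)
Lemma qform_eq0 n (X : 'M[C]_n) : (forall v, qform v X v = 0) -> X = 0.
Proof.
move=> X0; apply/matrixP => i j; rewrite mxE.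
have Xc c := X0 (delta_mx i 0 + c *: delta_mx j 0).
have := X0 (delta_mx i 0); have := X0 (delta_mx j 0); rewrite !qform_delta.
move=> Xjj Xii.
have := Xc 1; rewrite qformD !qform_delta Xii Xjj !mulr0 addr0 add0r rmorph1 !mul1r.
have := Xc 'i%C; rewrite qformD !qform_delta Xii Xjj !mulr0 addr0 add0r.
rewrite [X in _ + X = 0](_ : _ = - ('i%C * X j i)); last first.
  by rewrite -mulNr; congr (_ * _); apply/eqP; rewrite eq_complex /= oppr0 !eqxx.
rewrite -mulrBr => /eqP; rewrite mulf_eq0 => /orP[|/eqP Xji].
  by rewrite eq_complex /= oner_eq0 andbF.
by move/eqP; rewrite (subr0_eq Xji) -mulr2n mulrn_eq0 => /eqP.
Qed.

End Adjoint.

Section PositiveSemidefinite.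
Variable R : realType.
Local Notation C := R[i].

Lemma gram_eq0 m n (B : 'M[C]_(m, n)) : adj B *m B = 0 -> B = 0.
Proof.
move=> /matrixP G0; apply/matrixP => i j; rewrite mxE.
have := G0 j j; rewrite !mxE => /eqP.
rewrite psumr_eq0 => [/allP/(_ i (mem_index_enum _))|k _]; rewrite !mxE.
  by rewrite mulf_eq0 conjc_eq0 orbb => /eqP.
by rewrite mulrC mulcJ_ge0.
Qed.

Lemma psd_gram m n (B : 'M[C]_(m, n)) : psd (adj B *m B).
Proof.
split=> [|v]; first by rewrite adjmx_mul adjmxK.
by rewrite !mulmxA -adjmx_mul -mulmxA !mxE sumr_ge0 // => k _; rewrite !mxE mulrC mulcJ_ge0.
Qed.

Lemma psd_congr m n (A : 'M[C]_m) (B : 'M[C]_(m, n)) :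
  psd A -> psd (adj B *m A *m B).
Proof.
move=> [hA pA]; split=> [|v]; first by rewrite !adjmx_mul adjmxK hA mulmxA.
by have := pA (B *m v); rewrite adjmx_mul !mulmxA.
Qed.

Lemma psd_diag n (A : 'M[C]_n) i : psd A -> 0 <= A i i.
Proof. by case=> _ /(_ (delta_mx i 0)); rewrite -/(qform _ _ _) qform_delta. Qed.

Lemma psd_qformE n (X : 'M[C]_n) v :
  psd X -> qform v X v = (complex.Re (qform v X v))%:C.
Proof. by case=> _ /(_ v) /ge0_ReE. Qed.

Lemma projection_gram n (P : 'M[C]_n) : projection P -> P = adj P *m P.
Proof. by case=> PP adjP; rewrite adjP PP. Qed.

Lemma psd_projection n (P : 'M[C]_n) : projection P -> psd P.
Proof. by move=> /projection_gram ->; apply: psd_gram. Qed.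

Lemma projection_compl n (P : 'M[C]_n) : projection P -> projection (1%:M - P).
Proof.
case=> PP adjP; split; last by rewrite adjmxB adjmx1 adjP.
by rewrite mulmxBl mul1mx mulmxBr mulmx1 PP subrr subr0.
Qed.

Lemma supp_herm n (A : 'M[C]_n) : adj (supp A) = supp A.
Proof.
rewrite /supp; set S : 'M[C]_n := proj_ortho A.
have /submxP[K SE] := proj_ortho_sub A 1%:M; rewrite mul1mx in SE.
have := proj_ortho_compl_sub A 1%:M; rewrite mul1mx => /orthomx1P.
rewrite -adjmxE => SA0.
have SadjS : adj S = S *m adj S.
  apply/eqP; rewrite -subr_eq0 -{1}[adj S]mul1mx -mulmxBl.
  by rewrite [X in adj X]SE adjmx_mul mulmxA SA0 mul0mx.
by rewrite -[RHS]adjmxK [in RHS]SadjS adjmx_mul adjmxK -SadjS.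
Qed.

Lemma projection_supp n (A : 'M[C]_n) : projection (supp A).
Proof. by split; [exact: proj_ortho_proj | exact: supp_herm]. Qed.

Lemma sqnorm_ge0 n (v : 'cV[C]_n) : 0 <= (adj v *m v) 0 0.
Proof. exact/psd_diag/psd_gram. Qed.

Lemma sqnorm_eq0 n (v : 'cV[C]_n) : ((adj v *m v) 0 0 == 0) = (v == 0).
Proof.
apply/eqP/eqP => [v0|->]; last by rewrite mulmx0 mxE.
by apply: gram_eq0; apply/matrixP => i j; rewrite !ord1 v0 mxE.
Qed.

Lemma mx_eq0_cV m n (A : 'M[C]_(m, n)) : (forall v : 'cV[C]_n, A *m v = 0) -> A = 0.
Proof.
move=> A0; apply/matrixP => i j; have /matrixP/(_ i 0) := A0 (delta_mx j 0).
by rewrite -colE !mxE.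
Qed.

Lemma supp_le_mul0 n (A B : 'M[C]_n) (y : 'cV[C]_n) :
  loewner_le (supp A) (supp B) -> B *m y = 0 -> A *m y = 0.
Proof.
move=> [_ leAB] By0.
have SBy0 : supp B *m y = 0.
  have /submxP[K SE] := proj_ortho_sub B 1%:M; rewrite mul1mx in SE.
  by rewrite /supp SE -mulmxA By0 mulmx0.
have SAy0 : supp A *m y = 0.
  apply/eqP; rewrite -sqnorm_eq0 eq_le sqnorm_ge0 andbT.
  have := leAB y; rewrite -/(qform _ _ _) qformB {1}/qform -mulmxA SBy0 mulmx0.
  rewrite mxE sub0r oppr_ge0 /qform {1}(projection_gram (projection_supp A)).
  by rewrite adjmx_mul !mulmxA.
by rewrite -(proj_ortho_id (submx_refl A)) -mulmxA SAy0 mulmx0.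
Qed.

End PositiveSemidefinite.

Section Spectral.
Variable R : realType.
Local Notation C := R[i].

Lemma unitarymx_adj n (U : 'M[C]_n) :
  U \is unitarymx -> U *m adj U = 1%:M /\ adj U *m U = 1%:M.
Proof.
move=> Uu; rewrite adjmxE; split; first exact/unitarymxP.
by have := mulmxKtV (1%:M : 'M[C]_n) Uu erefl; rewrite mul1mx.
Qed.

Definition realdiag n (mu : 'I_n -> R) : 'M[C]_n := diag_mx (\row_i (mu i)%:C).

Lemma adjmx_realdiag n (mu : 'I_n -> R) : adj (realdiag mu) = realdiag mu.
Proof.
apply/matrixP => a b; rewrite !mxE.
by have [->|_] := eqVneq a b; rewrite ?mulr1n ?conjc_real // !mulr0n conjc0.
Qed.

Lemma realdiag_mul n (mu nu : 'I_n -> R) :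
  realdiag mu *m realdiag nu = realdiag (fun i => mu i * nu i).
Proof. by rewrite mulmx_diag; congr diag_mx; apply/rowP => i; rewrite !mxE rmorphM. Qed.

Definition udiag n (U : 'M[C]_n) (mu : 'I_n -> R) : 'M[C]_n :=
  adj U *m realdiag mu *m U.

Section Unitary.
Variables (n : nat) (U : 'M[C]_n).
Hypothesis Uu : U \is unitarymx.

Lemma udiag_conj mu : U *m udiag U mu *m adj U = realdiag mu.
Proof.
have [UU' _] := unitarymx_adj Uu.
by rewrite /udiag !mulmxA UU' mul1mx -mulmxA UU' mulmx1.
Qed.

Lemma udiag_psd_ge0 mu i : psd (udiag U mu) -> 0 <= mu i.
Proof.
move=> /(psd_congr (adj U)) /(psd_diag i).
by rewrite adjmxK udiag_conj !mxE eqxx mulr1n ler0c.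
Qed.

Lemma udiag_compl mu : 1%:M - udiag U mu = udiag U (fun i => 1 - mu i).
Proof.
have [_ U'U] := unitarymx_adj Uu; rewrite /udiag.
have -> : realdiag (fun i => 1 - mu i) = 1%:M - realdiag mu.
  apply/matrixP => a b; rewrite !mxE.
  by case: (a == b); rewrite ?mulr1n ?mulr0n ?subr0 // rmorphB.
by rewrite mulmxBr mulmxBl mulmx1 U'U.
Qed.

Lemma projection_udiag mu : (forall i, mu i * mu i = mu i) -> projection (udiag U mu).
Proof.
move=> mu_idem; have [UU' _] := unitarymx_adj Uu.
split; last by rewrite /udiag !adjmx_mul adjmxK adjmx_realdiag mulmxA.
rewrite /udiag !mulmxA -(mulmxA _ U) UU' mulmx1 -(mulmxA (adj U)) realdiag_mul.
by congr (_ *m realdiag _ *m _); apply/funext.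
Qed.

Lemma trR_udiag (X : 'M[C]_n) mu :
  trR X (udiag U mu) = \sum_i mu i * complex.Re ((U *m X *m adj U) i i).
Proof.
rewrite /trR /udiag !mulmxA mxtrace_mulC !mulmxA mul_mx_diag /mxtrace Re_sum.
by apply: eq_bigr => i _; rewrite !mxE ReMr mulrC.
Qed.

End Unitary.

Lemma psd_spectral n (A : 'M[C]_n) : psd A ->
  exists U mu, [/\ U \is unitarymx, forall i, 0 <= mu i & A = udiag U mu].
Proof.
move=> pA.
have /orthomx_spectralP : A \is normalmx by apply/normalmxP; rewrite -adjmxE pA.1.
rewrite invmx_unitary ?spectral_unitarymx // -adjmxE.
set U := spectralmx A; set d := spectral_diag A => AE.
have Uu : U \is unitarymx := spectral_unitarymx A.
have [UU' _] := unitarymx_adj Uu.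
have d_ge0 i : 0 <= d 0 i.
  have := psd_diag i (psd_congr (adj U) pA).
  by rewrite adjmxK AE !mulmxA UU' mul1mx -mulmxA UU' mulmx1 mxE eqxx mulr1n.
exists U, (fun i => complex.Re (d 0 i)); split=> [//|i|]; first exact: Re_ge0.
rewrite {1}AE /udiag /realdiag; congr (_ *m diag_mx _ *m _); apply/rowP => i.
by rewrite mxE -ge0_ReE.
Qed.

Lemma psd_gramE n (A : 'M[C]_n) : psd A -> exists B : 'M[C]_n, A = adj B *m B.
Proof.
move=> /psd_spectral[U [mu [_ mu_ge0 ->]]].
exists (realdiag (fun i => Num.sqrt (mu i)) *m U).
rewrite /udiag adjmx_mul adjmx_realdiag !mulmxA.
rewrite -(mulmxA (adj U) (realdiag _) (realdiag _)) realdiag_mul.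
by congr (_ *m realdiag _ *m _); apply/funext => i; rewrite -expr2 sqr_sqrtr.
Qed.

End Spectral.

Section Trace.
Variable R : realType.
Local Notation C := R[i].

Lemma tr_psd_ge0 n (A : 'M[C]_n) : psd A -> 0 <= \tr A.
Proof. by move=> pA; apply: sumr_ge0 => i _; apply: psd_diag. Qed.

Lemma tr_mul_psd_ge0 n (X Y : 'M[C]_n) : psd X -> psd Y -> 0 <= \tr (X *m Y).
Proof.
move=> pX /psd_gramE[B ->]; rewrite mulmxA mxtrace_mulC mulmxA.
by rewrite -{1}[B]adjmxK; apply/tr_psd_ge0/psd_congr.
Qed.

Lemma trR_psd_ge0 n (X Y : 'M[C]_n) : psd X -> psd Y -> 0 <= trR X Y.
Proof. by move=> pX pY; apply/Re_ge0/tr_mul_psd_ge0. Qed.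

Lemma tr_psdE n (X Y : 'M[C]_n) : psd X -> psd Y -> \tr (X *m Y) = (trR X Y)%:C.
Proof. by move=> pX pY; apply/ge0_ReE/tr_mul_psd_ge0. Qed.

Lemma trRB n (X A B : 'M[C]_n) : trR X (A - B) = trR X A - trR X B.
Proof. by rewrite /trR mulmxBr raddfB ReB. Qed.

Lemma trR1 n (X : 'M[C]_n) : trR X 1%:M = complex.Re (\tr X).
Proof. by rewrite /trR mulmx1. Qed.

Lemma density_trR1 n (X : 'M[C]_n) : density X -> trR X 1%:M = 1.
Proof. by case=> _ trX; rewrite trR1 trX. Qed.

Lemma trR_compress n (X Y P : 'M[C]_n) : trR X (P *m Y *m P) = trR (P *m X *m P) Y.
Proof. by rewrite /trR !mulmxA mxtrace_mulC !mulmxA. Qed.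

Lemma psd_compress_eq0 n (X P : 'M[C]_n) :
  psd X -> adj P = P -> P *m X *m P = 0 -> X *m P = 0.
Proof.
move=> /psd_gramE[B ->] adjP PXP0.
have BP0 : B *m P = 0.
  by apply: gram_eq0; rewrite adjmx_mul adjP mulmxA -(mulmxA P) PXP0.
by rewrite -mulmxA BP0 mulmx0.
Qed.

Lemma compress_eq0_trR n (X Y P : 'M[C]_n) : psd X -> projection P ->
  loewner_le (supp Y) (supp X) -> P *m X *m P = 0 -> trR X P = 0 /\ trR Y P = 0.
Proof.
move=> pX [_ adjP] leYX PXP0.
have XP0 := psd_compress_eq0 pX adjP PXP0.
have YP0 : Y *m P = 0.
  by apply: mx_eq0_cV => v; rewrite -mulmxA (supp_le_mul0 leYX) // mulmxA XP0 mul0mx.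
by rewrite /trR XP0 YP0 mxtrace0.
Qed.

End Trace.

Section RankOne.
Variable R : realType.
Local Notation C := R[i].

Definition rank1 n (v : 'cV[C]_n) : 'M[C]_n := ((adj v *m v) 0 0)^-1 *: (v *m adj v).

Lemma projection_rank1 n (v : 'cV[C]_n) : v != 0 -> projection (rank1 v).
Proof.
rewrite -sqnorm_eq0 /rank1; set k := (adj v *m v) 0 0 => k_neq0.
have kE : k = (complex.Re k)%:C := ge0_ReE (sqnorm_ge0 v).
split; last by rewrite adjmxZ adjmx_mul adjmxK conjc_inv {1}kE conjc_real -kE.
rewrite -scalemxAl -scalemxAr scalerA.
have -> : v *m adj v *m (v *m adj v) = k *: (v *m adj v).
  by rewrite mulmxA -(mulmxA v) [adj v *m v]mx11_scalar mul_mx_scalar -scalemxAl.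
by rewrite scalerA mulrAC mulVf ?mul1r.
Qed.

Lemma Re_sqnorm_gt0 n (v : 'cV[C]_n) : v != 0 -> 0 < complex.Re ((adj v *m v) 0 0).
Proof.
rewrite -sqnorm_eq0 lt_def => k_neq0; rewrite Re_ge0 ?sqnorm_ge0 // andbT.
by apply: contra k_neq0 => /eqP k0; rewrite (ge0_ReE (sqnorm_ge0 v)) k0.
Qed.

Lemma trR_rank1 n (X : 'M[C]_n) (v : 'cV[C]_n) :
  trR X (rank1 v) = complex.Re (qform v X v) / complex.Re ((adj v *m v) 0 0).
Proof.
rewrite /trR /rank1 -scalemxAr mxtraceZ mulmxA mxtrace_mulC mulmxA trace_mx11.
by rewrite {1}(ge0_ReE (sqnorm_ge0 v)) -fmorphV mulrC ReMr.
Qed.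

End RankOne.

Section Refinement.
Variable R : realType.
Local Notation C := R[i].
Variables (n : nat) (P E : 'M[C]_n).
Hypotheses (P_proj : projection P) (E_proj : projection E).

Definition refine3 : 'I_3 -> 'M[C]_n :=
  fun i => [:: P *m E *m P; P *m (1%:M - E) *m P; 1%:M - P]`_i.

Lemma compress_sum : P *m E *m P + P *m (1%:M - E) *m P = P.
Proof. by rewrite mulmxBr mulmxBl mulmx1 P_proj.1 addrC subrK. Qed.

Lemma trR_compress_sum X :
  trR X P = trR X (P *m E *m P) + trR X (P *m (1%:M - E) *m P).
Proof. by rewrite -{1}compress_sum /trR mulmxDr mxtraceD ReD. Qed.

Lemma psd_compress F : psd F -> psd (P *m F *m P).
Proof. by rewrite -{1}P_proj.2; apply: psd_congr. Qed.

Lemma povm_refine3 : povm refine3.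
Proof.
split=> [[[|[|[|//]]] i_lt3]|] /=.
- exact/psd_compress/psd_projection.
- exact/psd_compress/psd_projection/projection_compl.
- exact/psd_projection/projection_compl.
by rewrite !big_ord_recr big_ord0 /= add0r compress_sum subrKC.
Qed.

End Refinement.

Section TestDivergence.
Variables (R : realType) (alpha : R).
Hypotheses (alpha_gt0 : 0 < alpha) (alpha_lt1 : alpha < 1).
Local Notation C := R[i].
Variables (n : nat) (rho sigma : 'M[C]_n).
Hypotheses (rho_density : density rho) (sigma_density : density sigma).

Let rho_psd : psd rho := rho_density.1.
Let sigma_psd : psd sigma := sigma_density.1.

Definition Qtest (T : 'M[C]_n) :=
  gmean alpha (trR rho T) (trR sigma T)
  + gmean alpha (trR rho (1%:M - T)) (trR sigma (1%:M - T)).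

Lemma Dalpha_test_ch T :
  Dalpha alpha (test_ch T rho) (test_ch T sigma) = renyiQ alpha (Qtest T).
Proof. by rewrite DalphaE big_ord_recl big_ord1. Qed.

Lemma Qtest_ge0 T : 0 <= Qtest T.
Proof. by rewrite addr_ge0 ?gmean_ge0. Qed.

Lemma Qtest_compl T : Qtest (1%:M - T) = Qtest T.
Proof. by rewrite /Qtest subKr addrC. Qed.

Lemma test_projection_le T : test T -> exists2 P, projection P & Qtest P <= Qtest T.
Proof.
move=> [T_psd T'_psd]; have [U [mu [Uu mu_ge0 TE]]] := psd_spectral T_psd.
have mu01 i : 0 <= mu i <= 1.
  rewrite mu_ge0 -subr_ge0 /=.
  by apply: (udiag_psd_ge0 (mu := fun j => 1 - mu j) Uu); rewrite -udiag_compl // -TE.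
have diag_ge0 X i : psd X -> 0 <= complex.Re ((U *m X *m adj U) i i).
  by move=> X_psd; apply/Re_ge0/psd_diag; rewrite -{1}[U]adjmxK; apply: psd_congr.
pose r i := complex.Re ((U *m rho *m adj U) i i).
pose s i := complex.Re ((U *m sigma *m adj U) i i).
have QtestE nu : Qtest (udiag U nu) = Qdiag alpha r s nu.
  by rewrite /Qtest udiag_compl // !trR_udiag.
have [nu nu_bool le_nu] := Qdiag_vertex alpha_gt0 alpha_lt1
  (fun i => diag_ge0 rho i rho_psd) (fun i => diag_ge0 sigma i sigma_psd) mu01.
by exists (udiag U nu); [exact: projection_udiag | rewrite TE !QtestE].
Qed.

Lemma Dtest_le_proj P :
  (forall Q, projection Q -> (renyiQ alpha (Qtest Q) <= renyiQ alpha (Qtest P))%E) ->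
  (Dtest alpha rho sigma <= renyiQ alpha (Qtest P))%E.
Proof.
move=> Pmax; apply: ge_ereal_sup => _ [T /test_projection_le[Q Q_proj leQT] <-].
rewrite Dalpha_test_ch; apply: le_trans (Pmax Q Q_proj).
by rewrite ler_renyiQ ?Qtest_ge0.
Qed.

Lemma refine3_proportional P E : projection P -> projection E ->
  (Dalpha alpha (meas_ch (refine3 P E) rho) (meas_ch (refine3 P E) sigma)
     <= renyiQ alpha (Qtest P))%E ->
  trR rho (P *m E *m P) * trR sigma P = trR sigma (P *m E *m P) * trR rho P.
Proof.
move=> P_proj E_proj.
have tr_ge0 X F : psd X -> psd F -> 0 <= trR X (P *m F *m P).
  by move=> X_psd F_psd; apply/trR_psd_ge0/psd_compress.
have E_psd := psd_projection E_proj.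
have E'_psd := psd_projection (projection_compl E_proj).
rewrite DalphaE !big_ord_recr big_ord0 /= add0r.
rewrite ler_renyiQ ?Qtest_ge0 ?addr_ge0 ?gmean_ge0 //.
rewrite /Qtest /meas_ch /refine3 /= !(trR_compress_sum E P_proj rho).
rewrite !(trR_compress_sum E P_proj sigma) lerD2r.
move=> /(gmean_superadd_eq alpha_gt0 alpha_lt1) => /(_ _ _ _ _) ad_bc.
by rewrite !mulrDr ad_bc ?tr_ge0 // mulrC.
Qed.

Definition proj_maximizer P := projection P /\
  forall Q, projection Q -> (renyiQ alpha (Qtest Q) <= renyiQ alpha (Qtest P))%E.

Lemma proj_maximizer_compl P : proj_maximizer P -> proj_maximizer (1%:M - P).
Proof. by case=> P_proj Pmax; split; [exact: projection_compl | rewrite Qtest_compl]. Qed.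

Lemma Qtest_null P : trR rho P = 0 -> trR sigma P = 0 -> Qtest P = 1.
Proof.
move=> rho0 sigma0; rewrite /Qtest !trRB !density_trR1 //.
by rewrite rho0 sigma0 subr0 gmean0l // add0r gmeanxx ?ler01.
Qed.

Lemma exists_projection_Qtest_lt1 : rho != sigma -> exists2 E, projection E & Qtest E < 1.
Proof.
move=> rho_neq_sigma.
have [v qv_neq0] : exists v, qform v (rho - sigma) v != 0.
  apply: contrapT => all0; move/eqP: rho_neq_sigma; apply; apply/eqP.
  rewrite -subr_eq0; apply/eqP/qform_eq0 => v; apply/eqP.
  by apply: contrapT => qv_neq0; apply: all0; exists v; apply/negP.
have v_neq0 : v != 0 by apply: contra qv_neq0 => /eqP ->; rewrite /qform mulmx0 mxE.
have E_proj := projection_rank1 v_neq0.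
exists (rank1 v) => //.
have tr01 X : density X -> 0 <= trR X (rank1 v) <= 1.
  move=> [X_psd trX]; apply/andP; split.
    exact: trR_psd_ge0 X_psd (psd_projection E_proj).
  rewrite -subr_ge0 -(density_trR1 (conj X_psd trX)) -trRB.
  exact: trR_psd_ge0 X_psd (psd_projection (projection_compl E_proj)).
have tr_neq : trR rho (rank1 v) != trR sigma (rank1 v).
  apply: contra qv_neq0; rewrite !trR_rank1 => /eqP.
  move=> /(divIf (lt0r_neq0 (Re_sqnorm_gt0 v_neq0))) e.
  by rewrite qformB (psd_qformE _ rho_psd) (psd_qformE _ sigma_psd) e subrr.
rewrite /Qtest !trRB !density_trR1 //.
by apply: gmean_binary_lt1; rewrite // tr01.
Qed.

Lemma proj_maximizer_not_null P : rho != sigma -> proj_maximizer P ->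
  trR rho P = 0 -> trR sigma P = 0 -> False.
Proof.
move=> rho_neq_sigma [_ Pmax] rho0 sigma0.
have [E E_proj QE_lt1] := exists_projection_Qtest_lt1 rho_neq_sigma.
move: (Pmax E E_proj); rewrite (Qtest_null rho0 sigma0) ler_renyiQ ?Qtest_ge0 //.
by rewrite leNgt QE_lt1.
Qed.

Hypothesis Dtest_eq_Dmeas : Dtest alpha rho sigma = Dmeas alpha rho sigma.

Lemma proj_maximizer_meas_le P : proj_maximizer P ->
  forall k (M : 'I_k -> 'M[C]_n), povm M ->
  (Dalpha alpha (meas_ch M rho) (meas_ch M sigma) <= renyiQ alpha (Qtest P))%E.
Proof.
move=> [_ Pmax] k M M_povm; apply: le_trans (Dtest_le_proj Pmax).
by rewrite Dtest_eq_Dmeas; apply: ereal_sup_ubound; exists k, M.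
Qed.

Lemma proj_maximizer_proportional P : proj_maximizer P ->
  \tr (sigma *m P) *: (P *m rho *m P) = \tr (rho *m P) *: (P *m sigma *m P).
Proof.
move=> Pmaxz; have P_proj := Pmaxz.1.
apply/eqP; rewrite -subr_eq0; apply/eqP/qform_eq0 => v.
have [->|v_neq0] := eqVneq v 0; first by rewrite /qform mulmx0 mxE.
have E_proj := projection_rank1 v_neq0.
have := refine3_proportional P_proj E_proj
  (proj_maximizer_meas_le Pmaxz (povm_refine3 P_proj E_proj)).
rewrite !trR_compress !trR_rank1.
set zr := complex.Re (qform v (P *m rho *m P) v).
set zs := complex.Re (qform v (P *m sigma *m P) v) => e.
have {}e : zr * trR sigma P = zs * trR rho P.
  apply: (mulIf (invr_neq0 (lt0r_neq0 (Re_sqnorm_gt0 v_neq0)))).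
  by rewrite mulrAC e mulrAC.
have trE X : psd X -> \tr (X *m P) = (trR X P)%:C.
  by move=> X_psd; apply: tr_psdE X_psd (psd_projection P_proj).
rewrite qformB !qformZ (trE _ rho_psd) (trE _ sigma_psd).
rewrite (psd_qformE v (psd_compress P_proj rho_psd)).
rewrite (psd_qformE v (psd_compress P_proj sigma_psd)).
rewrite -/zr -/zs -!rmorphM -rmorphB.
by rewrite mulrC e mulrC subrr.
Qed.

End TestDivergence.

Local Close Scope complex_scope.

Theorem mainTheorem18 (R : realType) (n : nat) (rho sigma : 'M[R[i]]_n)
    (alpha : R) :
  density rho -> density sigma -> 0 < alpha < 1 ->
  Dtest alpha rho sigma = Dmeas alpha rho sigma ->
  forall P : 'M[R[i]]_n, projection P ->
  (forall Q : 'M[R[i]]_n, projection Q ->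
     (Dalpha alpha (test_ch Q rho) (test_ch Q sigma)
       <= Dalpha alpha (test_ch P rho) (test_ch P sigma))%E) ->
  let Pp := 1%:M - P in
  [/\ \tr (sigma *m P) *: (P *m rho *m P) = \tr (rho *m P) *: (P *m sigma *m P),
      \tr (sigma *m Pp) *: (Pp *m rho *m Pp)
        = \tr (rho *m Pp) *: (Pp *m sigma *m Pp) &
      rho != sigma ->
      (loewner_le (supp rho) (supp sigma) ->
         P *m sigma *m P != 0 /\ Pp *m sigma *m Pp != 0) /\
      (loewner_le (supp sigma) (supp rho) ->
         P *m rho *m P != 0 /\ Pp *m rho *m Pp != 0)].
Proof.
move=> rho_dens sigma_dens /andP[alpha_gt0 alpha_lt1] Deq P P_proj Pmax Pp.
have Pmaxz : proj_maximizer alpha rho sigma P.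
  split=> [//|Q Q_proj]; have := Pmax Q Q_proj.
  by rewrite !Dalpha_test_ch.
have Ppmaxz := proj_maximizer_compl Pmaxz.
have proportional := proj_maximizer_proportional alpha_gt0 alpha_lt1 rho_dens sigma_dens Deq.
split; [exact: proportional | exact: proportional |].
move=> rho_neq_sigma.
have not_null := proj_maximizer_not_null alpha_gt0 alpha_lt1 rho_dens sigma_dens rho_neq_sigma.
have [rho_psd sigma_psd] := (rho_dens.1, sigma_dens.1).
split=> supp_le; split; apply/eqP.
- by move=> /(compress_eq0_trR sigma_psd P_proj supp_le)[s0 r0]; apply: not_null Pmaxz r0 s0.
- by move=> /(compress_eq0_trR sigma_psd Ppmaxz.1 supp_le)[s0 r0]; apply: not_null Ppmaxz r0 s0.
- by move=> /(compress_eq0_trR rho_psd P_proj supp_le)[r0 s0]; apply: not_null Pmaxz r0 s0.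
by move=> /(compress_eq0_trR rho_psd Ppmaxz.1 supp_le)[r0 s0]; apply: not_null Ppmaxz r0 s0.
Qed.
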